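(* Let $n\ge2$ and $\theta\in\mathcal{M}(\mathrm{Cr}_n)$. Then $\theta\in\mathcal{AM}(\mathrm{Cr}_n)$ if and only if for every pair of distinct, non-disjoint maximal chains $C,D$ of $\mathrm{Cr}_n$, the chains $\theta(C)$ and $\theta(D)$ have opposite parities.
   Context: $\mathrm{Cr}_n$ is the poset $\{x_1,\dots,x_n,y_1,\dots,y_n\}$ whose only relations between distinct elements are $x_i<y_i$ ($1\le i\le n$), $x_{i+1}<y_i$ ($1\le i\le n-1$) and $x_1<y_n$; its maximal chains are exactly these $2n$ two-element chains. The chains $x_i<y_i$ are called odd, and $x_{i+1}<y_i$ ($1\le i\le n-1$) and $x_1<y_n$ are called even. For a finite connected poset $X$ and $x<y$, $e_{xy}$ denotes the incidence-algebra basis element and $B=\{e_{xy}:x<y\}$. For a bijection $\theta:B\to B$ and a maximal chain $C:u_1<\dots<u_k$, $\theta$ is increasing on $C$ if there is a maximal chain $D:v_1<\dots<v_k$ with $\theta(e_{u_iu_j})=e_{v_iv_j}$ for all $i<j$, decreasing if $\theta(e_{u_iu_j})=e_{v_{k-j+1}v_{k-i+1}}$ for all $i<j$; in either case $\theta(C)=D$. $\mathcal{M}(X)$ is the set of bijections $B\to B$ increasing or decreasing on every maximal chain. A walk is a sequence $u_0,\dots,u_m$ where for each $i$ one of $u_i,u_{i+1}$ covers the other; closed if $u_0=u_m$. For a closed walk $\Gamma:u_0,\dots,u_m=u_0$ and $z\in X$: $s^+_{\theta,\Gamma}(z)=|\{i: u_i<u_{i+1},\ \exists w>z,\ \theta(e_{zw})=e_{u_iu_{i+1}}\}|$,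 $s^-_{\theta,\Gamma}(z)=|\{i: u_i>u_{i+1},\ \exists w>z,\ \theta(e_{zw})=e_{u_{i+1}u_i}\}|$, $t^+_{\theta,\Gamma}(z)=|\{i: u_i<u_{i+1},\ \exists w<z,\ \theta(e_{wz})=e_{u_iu_{i+1}}\}|$, $t^-_{\theta,\Gamma}(z)=|\{i: u_i>u_{i+1},\ \exists w<z,\ \theta(e_{wz})=e_{u_{i+1}u_i}\}|$, $0\le i\le m-1$. $\theta$ is admissible if $s^+-s^-=t^+-t^-$ at every $z$ for every closed walk; $\mathcal{AM}(X)$ is the set of admissible elements of $\mathcal{M}(X)$. *)

From mathcomp Require Import all_boot all_order all_algebra.
Set Implicit Arguments. Unset Strict Implicit. Unset Printing Implicit Defensive.

Section Generic.
Variables (T : finType) (lt : rel T).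

(* The basis B = { e_{xy} : x < y }, e_{xy} represented by the pair (x, y). *)
Definition basisB := {p : T * T | lt p.1 p.2}.

Definition is_chain (c : seq T) : bool := sorted lt c.

Definition is_maxchain (c : seq T) : Prop :=
  is_chain c /\ forall c', is_chain c' -> {subset c <= c'} -> {subset c' <= c}.

(* theta is increasing on C with theta(C) = D:
   theta(e_{u_i u_j}) = e_{v_i v_j} for all i < j  (0-indexed positions) *)
Definition increasing_on (theta : basisB -> basisB) (C D : seq T) : Prop :=
  size D = size C /\
  forall (b : basisB) (i j : nat), i < j -> j < size C ->
    val b = (nth (val b).1 C i, nth (val b).1 C j) ->
    val (theta b) = (nth (val b).1 D i, nth (val b).1 D j).

(* theta is decreasing on C with theta(C) = D:
   theta(e_{u_i u_j}) = e_{v_{k-j+1} v_{k-i+1}} (1-indexed), i.e. with 0-indexed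
   positions i < j it maps to positions (k-1-j, k-1-i). *)
Definition decreasing_on (theta : basisB -> basisB) (C D : seq T) : Prop :=
  size D = size C /\
  forall (b : basisB) (i j : nat), i < j -> j < size C ->
    val b = (nth (val b).1 C i, nth (val b).1 C j) ->
    val (theta b) = (nth (val b).1 D (size C - 1 - j), nth (val b).1 D (size C - 1 - i)).

Definition maps_chain (theta : basisB -> basisB) (C D : seq T) : Prop :=
  is_maxchain D /\ (increasing_on theta C D \/ decreasing_on theta C D).

Definition inM (theta : basisB -> basisB) : Prop :=
  bijective theta /\
  forall C, is_maxchain C -> exists D, maps_chain theta C D.

Definition covers (u w : T) : bool := lt w u && [forall z, ~~ (lt w z && lt z u)].

Definition adj (a b : T) : bool := covers a b || covers b a.

(* A walk u_0, u_1, ..., u_m is given by u_0 and the list s = [u_1; ...; u_m]. *)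
Definition is_closed_walk (u0 : T) (s : seq T) : bool :=
  path adj u0 s && (last u0 s == u0).

Definition steps (u0 : T) (s : seq T) : seq (T * T) := zip (u0 :: s) s.

Definition s_plus (theta : basisB -> basisB) (u0 : T) (s : seq T) (z : T) : nat :=
  count (fun st : T * T => lt st.1 st.2 &&
           [exists b : basisB, ((val b).1 == z) && (val (theta b) == st)]) (steps u0 s).
Definition s_minus (theta : basisB -> basisB) (u0 : T) (s : seq T) (z : T) : nat :=
  count (fun st : T * T => lt st.2 st.1 &&
           [exists b : basisB, ((val b).1 == z) && (val (theta b) == (st.2, st.1))]) (steps u0 s).
Definition t_plus (theta : basisB -> basisB) (u0 : T) (s : seq T) (z : T) : nat :=
  count (fun st : T * T => lt st.1 st.2 &&
           [exists b : basisB, ((val b).2 == z) && (val (theta b) == st)]) (steps u0 s).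
Definition t_minus (theta : basisB -> basisB) (u0 : T) (s : seq T) (z : T) : nat :=
  count (fun st : T * T => lt st.2 st.1 &&
           [exists b : basisB, ((val b).2 == z) && (val (theta b) == (st.2, st.1))]) (steps u0 s).

Definition admissible (theta : basisB -> basisB) : Prop :=
  forall (u0 : T) (s : seq T), is_closed_walk u0 s -> forall z : T,
    ((s_plus theta u0 s z)%:Z - (s_minus theta u0 s z)%:Z =
     (t_plus theta u0 s z)%:Z - (t_minus theta u0 s z)%:Z)%R.

Definition inAM (theta : basisB -> basisB) : Prop := inM theta /\ admissible theta.

End Generic.

(* element (false, i) is x_{i+1}, element (true, i) is y_{i+1}  (i : 'I_n, 0-indexed) *)
Definition crown (n : nat) : finType := (bool * 'I_n)%type.
Definition cx (n : nat) (i : 'I_n) : crown n := (false, i).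
Definition cy (n : nat) (i : 'I_n) : crown n := (true, i).

(* strict order: x_i < y_i, x_{i+1} < y_i, x_1 < y_n  (indices mod n) *)
Definition crown_lt (n : nat) : rel (crown n) := fun a b =>
  [&& ~~ a.1, b.1 & ((val a.2 == val b.2) || (val a.2 == (val b.2).+1 %% n))].
Arguments crown_lt n : clear implicits.

Definition odd_chain (n : nat) (c : seq (crown n)) : Prop :=
  exists i : 'I_n, c = [:: cx i; cy i].
Definition even_chain (n : nat) (c : seq (crown n)) : Prop :=
  exists i : 'I_n, c = [:: cx (ordS i); cy i].

From mathcomp Require Import all_boot all_order all_algebra.
From mathcomp Require Import zify.
Set Implicit Arguments. Unset Strict Implicit. Unset Printing Implicit Defensive.
Import GRing.Theory.

(* The maximal chains of Cr_n are its 2n edges, and theta(C) is the chain of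
   the edge theta(e_C).  Along a closed walk, flow conservation at x_k and at y_k
   makes the two edges at each vertex carry opposite net multiplicities, so the
   net multiplicity of an edge is its parity (+1 odd, -1 even) times a winding
   number w of the walk.  Admissibility at a vertex z thus reads
   w * (parity of theta e + parity of theta e') = 0 for the two edges e, e' at z;
   the walk once around the crown has w = 1, and two distinct maximal chains
   meet exactly when they are the two edges at some vertex. *)

Lemma Posz_sum (I : finType) (P : pred I) (f : I -> nat) :
  ((\sum_(i | P i) f i)%N%:Z = \sum_(i | P i) (f i)%:Z)%R.
Proof. by rewrite -natz natr_sum; apply: eq_bigr => i _; rewrite natz. Qed.

Lemma count_exists_inj (I : finType) (X : eqType) (Q : pred I) (g : I -> X) l :
  injective g ->
  count (fun x => [exists i, Q i && (g i == x)]) l =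
  (\sum_(i | Q i) count (pred1 (g i)) l)%N.
Proof.
move=> ginj; elim: l => [|x l IH] /=; first by rewrite big1.
rewrite IH big_split /=; congr (_ + _)%N.
case: existsP => [[i0 /andP[Qi0 /eqP <-]]|no_i].
- rewrite (bigD1 i0) //= eqxx big1 // => i /andP[_ ne_i].
  by rewrite (inj_eq ginj) eq_sym (negbTE ne_i).
- rewrite big1 // => i Qi; case: eqP => // xg; case: no_i; exists i.
  by rewrite Qi xg eqxx.
Qed.

Lemma count_add_in (X : eqType) (p a c : pred X) (l : seq X) :
  {in l, forall x, p x = a x + c x :> nat} -> count p l = (count a l + count c l)%N.
Proof.
elim: l => [|x l IH] //= pac; rewrite pac ?mem_head // IH; first lia.
by move=> y ly; apply: pac; rewrite inE ly orbT.
Qed.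

Lemma count_flatten_pairs (X I : Type) (p : pred X) (f g : I -> X) l :
  count p (flatten [seq [:: f i; g i] | i <- l]) =
  (count (fun i => p (f i)) l + count (fun i => p (g i)) l)%N.
Proof. by elim: l => //= i l ->; rewrite addnACA addnA. Qed.

Lemma count_enum_pred1 (T : finType) (P : pred T) k :
  P =1 pred1 k -> count P (enum T) = 1%N.
Proof. by move/eq_count->; rewrite (count_uniq_mem _ (enum_uniq T)) mem_enum. Qed.

Lemma count_enum_pred0 (T : finType) (P : pred T) :
  P =1 pred0 -> count P (enum T) = 0%N.
Proof. by move/eq_count->; rewrite count_pred0. Qed.

Definition swap (T : Type) (p : T * T) : T * T := (p.2, p.1).

Lemma swapK (T : Type) : involutive (@swap T). Proof. by case. Qed.

Lemma count_pred1_swap (T : eqType) (l : seq (T * T)) p :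
  count (pred1 p) (map (@swap T) l) = count (pred1 (swap p)) l.
Proof. by rewrite count_map; apply: eq_count => st; rewrite /= (inv_eq (@swapK T)). Qed.

Lemma path_steps (T : finType) (r : rel T) u0 s :
  path r u0 s = all (fun st => r st.1 st.2) (steps u0 s).
Proof. by elim: s u0 => //= a s IH u0; rewrite IH. Qed.

Lemma closed_walk_out_in (T : finType) (u0 : T) s v : last u0 s = u0 ->
  count (fun st => st.1 == v) (steps u0 s) = count (fun st => st.2 == v) (steps u0 s).
Proof.
have fst_steps : [seq st.1 | st <- steps u0 s] = belast u0 s.
  by elim: s u0 => //= a s IH u0; rewrite IH.
have snd_steps : [seq st.2 | st <- steps u0 s] = s by apply: unzip2_zip.
move=> closed; rewrite -[LHS](count_map fst (pred1 v)) -[RHS](count_map snd (pred1 v)).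
rewrite fst_steps snd_steps.
have := congr1 (count (pred1 v)) (lastI u0 s).
by rewrite closed -cats1 count_cat /=; lia.
Qed.

Section Walks.
Variables (T : finType) (lt : rel T).
Local Notation B := (basisB lt).

Definition net (l : seq (T * T)) (p : T * T) : int :=
  ((count (pred1 p) l)%:Z - (count (pred1 (swap p)) l)%:Z)%R.

Lemma net_image_counts (g : B -> B) (Q : pred B) l : injective g ->
  ((count (fun st => lt st.1 st.2 && [exists b, Q b && (val (g b) == st)]) l)%:Z
   - (count (fun st => lt st.2 st.1 &&
                [exists b, Q b && (val (g b) == (st.2, st.1))]) l)%:Z
   = \sum_(b | Q b) net l (val (g b)))%R.
Proof.
move=> ginj; have vginj : injective (val \o g) := inj_comp val_inj ginj.
have lt_img p : [exists b, Q b && (val (g b) == p)] -> lt p.1 p.2.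
  by case/existsP=> b /andP[_ /eqP <-]; exact: (valP (g b)).
rewrite /net sumrB -!Posz_sum -(count_exists_inj Q l vginj).
rewrite -(count_exists_inj Q l (inj_comp (can_inj (@swapK T)) vginj)).
congr (_%:Z - _%:Z)%R; apply: eq_count => st /=.
- exact/andb_idl/lt_img.
- rewrite (andb_idl (lt_img (swap st))); apply: eq_existsb => b.
  by rewrite (inv_eq (@swapK T)).
Qed.

Lemma admissible_netE (theta : B -> B) : injective theta ->
  admissible theta <->
  forall u0 s, is_closed_walk lt u0 s -> forall z,
    (\sum_(b | (val b).1 == z) net (steps u0 s) (val (theta b)) =
     \sum_(b | (val b).2 == z) net (steps u0 s) (val (theta b)))%R.
Proof.
move=> tinj.
have s_net u0 s z := net_image_counts (fun b => (val b).1 == z) (steps u0 s) tinj.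
have t_net u0 s z := net_image_counts (fun b => (val b).2 == z) (steps u0 s) tinj.
split=> adm u0 s walk z.
- exact: etrans (esym (s_net u0 s z)) (etrans (adm u0 s walk z) (t_net u0 s z)).
- exact: etrans (s_net u0 s z) (etrans (adm u0 s walk z) (esym (t_net u0 s z))).
Qed.

Hypothesis lt_asym : forall a c, lt a c -> ~~ lt c a.

Lemma adj_lt a c : adj lt a c -> lt a c || lt c a.
Proof. by rewrite /adj /covers => /orP[] /andP[-> _]; rewrite ?orbT. Qed.

Lemma existsB_val (P : pred (T * T)) p :
  [exists b : B, P (val b) && (val b == p)] = lt p.1 p.2 && P p.
Proof.
apply/existsP/andP => [[b /andP[Pb /eqP <-]]|[ltp Pp]].
  by split=> //; exact: (valP b).
by exists (exist _ p ltp); rewrite /= Pp eqxx.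
Qed.

Lemma count_steps_from l v : all (fun st => adj lt st.1 st.2) l ->
  count (fun st => st.1 == v) l =
  (\sum_(b : B | (val b).1 == v) count (pred1 (val b)) l +
   \sum_(b : B | (val b).2 == v) count (pred1 (swap (val b))) l)%N.
Proof.
move=> /allP ladj.
rewrite -(count_exists_inj (fun b : B => (val b).1 == v) l val_inj).
rewrite -(count_exists_inj (fun b : B => (val b).2 == v) l
  (inj_comp (can_inj (@swapK T)) val_inj)).
apply: count_add_in => st /ladj /adj_lt lt_st /=.
rewrite (existsB_val (fun p => p.1 == v)).
under eq_existsb => b do rewrite (inv_eq (@swapK T)).
rewrite (existsB_val (fun p => p.2 == v)) /=.
by case/orP: lt_st => h; rewrite h (negbTE (lt_asym h)) /= ?addn0.
Qed.

Lemma count_steps_to l v : all (fun st => adj lt st.1 st.2) l ->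
  count (fun st => st.2 == v) l =
  (\sum_(b : B | (val b).2 == v) count (pred1 (val b)) l +
   \sum_(b : B | (val b).1 == v) count (pred1 (swap (val b))) l)%N.
Proof.
move=> ladj.
have swap_adj : all (fun st => adj lt st.1 st.2) (map (@swap T) l).
  by rewrite all_map; apply: sub_all ladj => st; rewrite /= /adj orbC.
rewrite -[LHS]/(count (preim (@swap T) (fun st => st.1 == v)) l) -count_map.
rewrite count_steps_from // addnC.
by congr (_ + _)%N; apply: eq_bigr => b _; rewrite count_pred1_swap ?swapK.
Qed.

Lemma net_conservation u0 s v : is_closed_walk lt u0 s ->
  (\sum_(b : B | (val b).1 == v) net (steps u0 s) (val b) =
   \sum_(b : B | (val b).2 == v) net (steps u0 s) (val b))%R.
Proof.
case/andP; rewrite path_steps => ladj /eqP closed.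
have := closed_walk_out_in v closed.
rewrite (count_steps_from v ladj) (count_steps_to v ladj).
rewrite /net !sumrB -!Posz_sum.
set A := (\sum_(b | _) _)%N; set C := (\sum_(b | _) _)%N.
set D := (\sum_(b | _) _)%N; set E := (\sum_(b | _) _)%N.
lia.
Qed.

End Walks.

Section Crown.
Variable n : nat.
Hypothesis n_gt1 : 1 < n.
Local Notation lt := (crown_lt n).
Local Notation B := (basisB lt).
Let n_pos : 0 < n := ltnW n_gt1.

Lemma crown_lt_fst a c : lt a c -> a.1 = false.
Proof. by case/and3P; case: (a.1). Qed.

Lemma crown_lt_snd a c : lt a c -> c.1 = true.
Proof. by case/and3P => _; case: (c.1). Qed.

Lemma crown_lt_asym a c : lt a c -> ~~ lt c a.
Proof. by move=> ac; apply/negP => /crown_lt_snd; rewrite (crown_lt_fst ac). Qed.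

Lemma crown_ltE a c : lt a c -> a = cx a.2 /\ c = cy c.2.
Proof.
by move=> ac; rewrite /cx /cy -(crown_lt_fst ac) -(crown_lt_snd ac); case: a c {ac} => ? ? [].
Qed.

Lemma ordS_neq (i : 'I_n) : ordS i != i.
Proof.
apply/eqP => /(congr1 val) /=; have := ltn_ord i.
case: (ltngtP i.+1 n) => [lt_in|//|eq_in]; first by rewrite modn_small //; lia.
by rewrite eq_in modnn; lia.
Qed.

Lemma crown_lt_odd (k : 'I_n) : lt (cx k) (cy k).
Proof. by rewrite /crown_lt /= eqxx. Qed.

Lemma crown_lt_even (k : 'I_n) : lt (cx (ordS k)) (cy k).
Proof. by rewrite /crown_lt /= eqxx orbT. Qed.

Definition e_odd (k : 'I_n) : B := exist _ (cx k, cy k) (crown_lt_odd k).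
Definition e_even (k : 'I_n) : B := exist _ (cx (ordS k), cy k) (crown_lt_even k).

Lemma crown_basis_cases (b : B) : b = e_odd (val b).2.2 \/ b = e_even (val b).2.2.
Proof.
case: b => [[[[] i] [[] j]] ij] //=.
case/and3P: (ij) => _ _ /orP[] /eqP /= eq_ij; [left | right]; apply: val_inj => /=.
- by rewrite (val_inj eq_ij).
- by have -> : i = ordS j by apply: val_inj.
Qed.

Lemma e_odd_neq_even (k j : 'I_n) : e_odd k != e_even j.
Proof.
apply/eqP => /(congr1 val) [k_Sj k_j].
by have := ordS_neq j; rewrite -k_Sj k_j eqxx.
Qed.

Lemma basis_from_x (k : 'I_n) (b : B) :
  (val b).1 = cx k -> b = e_odd k \/ b = e_even (ord_pred k).
Proof.
by case: (crown_basis_cases b) => -> [eq_k]; [left | right]; rewrite -?eq_k ?ordSK.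
Qed.

Lemma basis_to_y (k : 'I_n) (b : B) : (val b).2 = cy k -> b = e_odd k \/ b = e_even k.
Proof. by case: (crown_basis_cases b) => -> [->]; [left | right]. Qed.

Section Sums.
Variables (V : nmodType) (F : B -> V).

Lemma sum_pair (P : pred B) b1 b2 : b1 != b2 -> P b1 -> P b2 ->
  (forall b, P b -> b = b1 \/ b = b2) -> (\sum_(b | P b) F b = F b1 + F b2)%R.
Proof.
move=> ne12 P1 P2 only12.
rewrite (bigD1 b1) // (bigD1 b2) /=; last by rewrite P2 eq_sym.
rewrite big1 ?addr0 // => b /andP[/andP[Pb ne1] ne2].
by case: (only12 b Pb) => eq_b; [move: ne1 | move: ne2]; rewrite eq_b eqxx.
Qed.

Lemma sum_from_x k :
  (\sum_(b | (val b).1 == cx k) F b = F (e_odd k) + F (e_even (ord_pred k)))%R.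
Proof.
apply: sum_pair; rewrite ?e_odd_neq_even //= ?ord_predK //.
by move=> b /eqP; apply: basis_from_x.
Qed.

Lemma sum_to_y k : (\sum_(b | (val b).2 == cy k) F b = F (e_odd k) + F (e_even k))%R.
Proof.
by apply: sum_pair; rewrite ?e_odd_neq_even // => b /eqP; apply: basis_to_y.
Qed.

Lemma sum_to_x k : (\sum_(b | (val b).2 == cx k) F b = 0)%R.
Proof. by rewrite big1 // => b /eqP eq_b; have := crown_lt_snd (valP b); rewrite eq_b. Qed.

Lemma sum_from_y k : (\sum_(b | (val b).1 == cy k) F b = 0)%R.
Proof. by rewrite big1 // => b /eqP eq_b; have := crown_lt_fst (valP b); rewrite eq_b. Qed.

End Sums.

Definition edge_chain (b : B) : seq (crown n) := [:: (val b).1; (val b).2].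

Lemma edge_chain_inj : injective edge_chain.
Proof.
move=> b1 b2 [eq1 eq2]; apply: val_inj.
by rewrite [val b1]surjective_pairing eq1 eq2 -surjective_pairing.
Qed.

Lemma edge_chain_uniq b : uniq (edge_chain b).
Proof.
rewrite /= inE andbT; apply/eqP => eq_b.
by have := crown_lt_snd (valP b); rewrite -eq_b (crown_lt_fst (valP b)).
Qed.

Lemma crown_chain_size c : is_chain lt c -> size c <= 2.
Proof.
case: c => [|a [|b [|c t]]] //= /and3P[ab bc _].
by have := crown_lt_snd ab; rewrite (crown_lt_fst bc).
Qed.

Lemma maxchain_edge_chain b : is_maxchain lt (edge_chain b).
Proof.
split=> [|c chain_c sub_c]; first by rewrite /is_chain /= andbT (valP b).
have [_ same_c] := uniq_min_size (edge_chain_uniq b) sub_c (crown_chain_size chain_c).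
by move=> x; rewrite same_c.
Qed.

Lemma maxchain_edge C : is_maxchain lt C -> exists b, C = edge_chain b.
Proof.
have too_short b : {subset C <= edge_chain b} -> is_maxchain lt C -> size C < 2 -> False.
  move=> sub_b [_ maxC]; rewrite ltnNge => /negP; apply.
  exact: uniq_leq_size (edge_chain_uniq b) (maxC _ (maxchain_edge_chain b).1 sub_b).
case: C too_short => [|a [|c [|d t]]] too_short maxC.
- by case: (too_short (e_odd (Ordinal n_pos))).
- case: (too_short (e_odd a.2)) => // x; rewrite inE => /eqP ->.
  by case: a {maxC too_short} => [[] k]; rewrite !inE eqxx ?orbT.
- by case: maxC; rewrite /is_chain /= andbT => ac _; exists (exist _ (a, c) ac).
- by have := crown_chain_size maxC.1.
Qed.

Lemma maps_edge_chain (theta : B -> B) b C' :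
  maps_chain theta (edge_chain b) C' -> C' = edge_chain (theta b).
Proof.
case=> _ [] [size_C' maps_b]; have := maps_b b 0 1 isT isT (surjective_pairing _);
  by case: C' size_C' {maps_b} => [|p [|q []]] //= _ theta_b; rewrite /edge_chain /= theta_b.
Qed.

Definition parity (b : B) : int := if (val b).1.2 == (val b).2.2 then 1%R else (-1)%R.

Lemma parity_odd k : parity (e_odd k) = 1%R.
Proof. by rewrite /parity /= eqxx. Qed.

Lemma parity_even k : parity (e_even k) = (-1)%R.
Proof. by rewrite /parity /= (negbTE (ordS_neq k)). Qed.

Lemma odd_chain_parity b : odd_chain (edge_chain b) <-> parity b = 1%R.
Proof.
case: (crown_basis_cases b) => ->; rewrite ?parity_odd ?parity_even; split=> //.
- by exists (val b).2.2.
- by case=> i [Sk_i k_i]; have := ordS_neq (val b).2.2; rewrite Sk_i k_i eqxx.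
Qed.

Lemma even_chain_parity b : even_chain (edge_chain b) <-> parity b = (-1)%R.
Proof.
case: (crown_basis_cases b) => ->; rewrite ?parity_odd ?parity_even; split=> //.
- by case=> i [k_Si k_i]; have := ordS_neq i; rewrite -k_Si k_i eqxx.
- by exists (val b).2.2.
Qed.

Lemma parity_opposite b1 b2 :
  (parity b1 + parity b2 = 0)%R <->
  (parity b1 = 1 /\ parity b2 = -1 \/ parity b1 = -1 /\ parity b2 = 1)%R.
Proof. by rewrite /parity; do 2 case: (_ == _); lia. Qed.

Lemma ordS_invariant_const (X : Type) (f : 'I_n -> X) :
  (forall k, f (ordS k) = f k) -> forall k, f k = f (Ordinal n_pos).
Proof.
move=> f_ordS [i lt_in]; elim: i lt_in => [|i IH] lt_in; first by congr f; apply: val_inj.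
rewrite -(IH (ltnW lt_in)) -[RHS]f_ordS; congr f; apply: val_inj.
by rewrite /= modn_small.
Qed.

Lemma closed_walk_net u0 s : is_closed_walk lt u0 s ->
  exists w : int, forall b, net (steps u0 s) (val b) = (parity b * w)%R.
Proof.
move=> walk; pose N (b : B) := net (steps u0 s) (val b).
have at_x k : (N (e_odd k) + N (e_even (ord_pred k)) = 0)%R.
  by have := net_conservation crown_lt_asym (cx k) walk; rewrite sum_from_x sum_to_x.
have at_y k : (N (e_odd k) + N (e_even k) = 0)%R.
  by have := net_conservation crown_lt_asym (cy k) walk; rewrite sum_from_y sum_to_y.
have N_ordS k : N (e_odd (ordS k)) = N (e_odd k).
  by apply: (addIr (N (e_even k))); rewrite at_y -{2}(ordSK k) at_x.
exists (N (e_odd (Ordinal n_pos))) => b.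
have N_odd k := ordS_invariant_const (f := fun k => N (e_odd k)) N_ordS k.
case: (crown_basis_cases b) => ->; rewrite ?parity_odd ?parity_even.
- by rewrite mul1r; apply: N_odd.
- by rewrite mulN1r -(N_odd (val b).2.2); apply/eqP; rewrite -addr_eq0 addrC at_y.
Qed.

Lemma crown_adj a c : adj lt a c = lt a c || lt c a.
Proof.
have covers_lt u w : covers lt u w = lt w u.
  rewrite /covers andb_idr // => _; apply/forallP => z; apply/negP => /andP[wz zu].
  by have := crown_lt_snd wz; rewrite (crown_lt_fst zu).
by rewrite /adj !covers_lt orbC.
Qed.

Definition inZ (i : nat) : 'I_n := Ordinal (ltn_pmod i n_pos).

Lemma inZS i : inZ i.+1 = ordS (inZ i).
Proof. by apply: val_inj; rewrite /= -[in RHS]addn1 modnDml addn1. Qed.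

Lemma inZ_val (k : 'I_n) : inZ k = k.
Proof. by apply: val_inj; rewrite /= modn_small. Qed.

Definition tour (a m : nat) : seq (crown n) :=
  flatten [seq [:: cy (inZ i); cx (inZ i.+1)] | i <- iota a m].

Lemma steps_tour a m : steps (cx (inZ a)) (tour a m) =
  flatten [seq [:: (cx (inZ i), cy (inZ i)); (cy (inZ i), cx (inZ i.+1))] | i <- iota a m].
Proof. by elim: m a => //= m IH a; rewrite -IH. Qed.

Lemma last_tour a m : last (cx (inZ a)) (tour a m) = cx (inZ (a + m)).
Proof. by elim: m a => [|m IH] a /=; [rewrite addn0 | rewrite IH addSnnS]. Qed.

Lemma tour_closed : is_closed_walk lt (cx (inZ 0)) (tour 0 n).
Proof.
rewrite /is_closed_walk path_steps steps_tour last_tour add0n.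
apply/andP; split; last by apply/eqP; congr cx; apply: val_inj; rewrite /= modnn mod0n.
apply/allP => st /flatten_mapP[i _]; rewrite !inE => /orP[] /eqP -> /=.
- by rewrite crown_adj crown_lt_odd.
- by rewrite crown_adj inZS crown_lt_even orbT.
Qed.

Lemma net_tour_odd k : net (steps (cx (inZ 0)) (tour 0 n)) (val (e_odd k)) = 1%R.
Proof.
rewrite /net steps_tour -val_enum_ord -map_comp !count_flatten_pairs /=.
rewrite (count_enum_pred1 (k := k)); last by move=> j; rewrite /= inZ_val !xpair_eqE andbb.
rewrite !count_enum_pred0 // => j /=; rewrite !inZ_val !xpair_eqE //=.
by rewrite inZS inZ_val; case: eqP => // ->; rewrite (negbTE (ordS_neq k)).
Qed.

Lemma net_tour b : net (steps (cx (inZ 0)) (tour 0 n)) (val b) = parity b.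
Proof.
have [w net_w] := closed_walk_net tour_closed.
have w1 : w = 1%R by have := net_w (e_odd (inZ 0)); rewrite net_tour_odd parity_odd mul1r.
by rewrite net_w w1 mulr1.
Qed.

Definition edges_meet (b1 b2 : B) : bool := has (fun u => u \in edge_chain b2) (edge_chain b1).

Lemma edges_meet_cases b1 b2 : edges_meet b1 b2 ->
  (exists k, (val b1).1 = cx k /\ (val b2).1 = cx k) \/
  (exists k, (val b1).2 = cy k /\ (val b2).2 = cy k).
Proof.
have [x1 y1] := crown_ltE (valP b1).
case/hasP=> u; rewrite !inE => /orP[] /eqP -> /orP[] /eqP eq12.
- by left; exists (val b1).1.2; rewrite -x1 eq12.
- by have := crown_lt_fst (valP b1); rewrite eq12 (crown_lt_snd (valP b2)).
- by have := crown_lt_snd (valP b1); rewrite eq12 (crown_lt_fst (valP b2)).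
- by right; exists (val b1).2.2; rewrite -y1 eq12.
Qed.

Lemma meeting_edges (R : B -> B -> Prop) : (forall b1 b2, R b1 b2 -> R b2 b1) ->
  (forall k, R (e_odd k) (e_even (ord_pred k))) -> (forall k, R (e_odd k) (e_even k)) ->
  forall b1 b2, b1 != b2 -> edges_meet b1 b2 -> R b1 b2.
Proof.
move=> R_sym at_x at_y b1 b2 + /edges_meet_cases[[k [x1 x2]] | [k [y1 y2]]].
- by case: (basis_from_x x1) (basis_from_x x2) => -> [] ->;
    rewrite ?eqxx // => _; apply: R_sym.
- by case: (basis_to_y y1) (basis_to_y y2) => -> [] ->;
    rewrite ?eqxx // => _; apply: R_sym.
Qed.

Lemma edges_meet_at_x k : edges_meet (e_odd k) (e_even (ord_pred k)).
Proof. by apply/hasP; exists (cx k); rewrite !inE /= ?ord_predK eqxx. Qed.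

Lemma edges_meet_at_y k : edges_meet (e_odd k) (e_even k).
Proof. by apply/hasP; exists (cy k); rewrite !inE eqxx ?orbT. Qed.

Lemma admissible_parity (theta : B -> B) : injective theta ->
  admissible theta <->
  (forall b1 b2, b1 != b2 -> edges_meet b1 b2 ->
     parity (theta b1) + parity (theta b2) = 0)%R.
Proof.
move=> tinj; rewrite admissible_netE //; split=> [adm | opp u0 s walk z].
- apply: meeting_edges => [b1 b2|k|k]; first by rewrite addrC.
  + by have := adm _ _ tour_closed (cx k); rewrite sum_from_x sum_to_x !net_tour.
  + by have := adm _ _ tour_closed (cy k); rewrite sum_from_y sum_to_y !net_tour.
- have [w net_w] := closed_walk_net walk.
  have opp_w b1 b2 : b1 != b2 -> edges_meet b1 b2 ->
      (parity (theta b1) * w + parity (theta b2) * w = 0)%R.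
    by move=> ne12 meet12; rewrite -mulrDl opp // mul0r.
  case: z => [[] k].
  + by rewrite sum_from_y sum_to_y !net_w opp_w ?e_odd_neq_even ?edges_meet_at_y.
  + by rewrite sum_from_x sum_to_x !net_w opp_w ?e_odd_neq_even ?edges_meet_at_x.
Qed.

Lemma opposite_parity_chains (theta : B -> B) :
  (forall C, is_maxchain lt C -> exists D, maps_chain theta C D) ->
  (forall C D C' D' : seq (crown n),
     is_maxchain lt C -> is_maxchain lt D ->
     C <> D -> has (fun u => u \in D) C ->
     maps_chain theta C C' -> maps_chain theta D D' ->
     (odd_chain C' /\ even_chain D') \/ (even_chain C' /\ odd_chain D')) <->
  (forall b1 b2, b1 != b2 -> edges_meet b1 b2 ->
     parity (theta b1) + parity (theta b2) = 0)%R.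
Proof.
move=> theta_maps; split=> [opp b1 b2 ne12 meet12 | opp C D C' D' maxC maxD neCD meetCD].
- have [C' mapsC] := theta_maps _ (maxchain_edge_chain b1).
  have [D' mapsD] := theta_maps _ (maxchain_edge_chain b2).
  have neC : edge_chain b1 <> edge_chain b2.
    by move=> /edge_chain_inj eq12; rewrite eq12 eqxx in ne12.
  have := opp _ _ C' D' (maxchain_edge_chain b1) (maxchain_edge_chain b2)
    neC meet12 mapsC mapsD.
  by rewrite (maps_edge_chain mapsC) (maps_edge_chain mapsD) !odd_chain_parity
    !even_chain_parity => /parity_opposite.
- have [b1 eqC] := maxchain_edge maxC; have [b2 eqD] := maxchain_edge maxD; subst C D.
  move=> /maps_edge_chain -> /maps_edge_chain ->.
  rewrite !odd_chain_parity !even_chain_parity; apply/parity_opposite/opp => //.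
  by apply/eqP => eq12; apply: neCD; rewrite eq12.
Qed.

End Crown.

Unset Implicit Arguments.
Set Strict Implicit.

Theorem lemma4p9 (n : nat) (hn : 2 <= n)
    (theta : basisB (crown_lt n) -> basisB (crown_lt n)) :
  inM theta ->
  (inAM theta <->
   forall C D C' D' : seq (crown n),
     is_maxchain (crown_lt n) C -> is_maxchain (crown_lt n) D ->
     C <> D -> has (fun u => u \in D) C ->
     maps_chain theta C C' -> maps_chain theta D D' ->
     (odd_chain C' /\ even_chain D') \/ (even_chain C' /\ odd_chain D')).
Proof.
move=> theta_M; have [theta_bij theta_maps] := theta_M.
apply: (iff_trans _ (iff_sym (opposite_parity_chains hn theta_maps))).
apply: (iff_trans _ (admissible_parity hn (bij_inj theta_bij))).
by split=> [[]|].
Qed.
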